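(* Let $q$ be a prime power, let $\lambda \in \mathbb{F}_{q^n}\setminus\mathbb{F}_q$, $t = [\mathbb{F}_q(\lambda):\mathbb{F}_q]$, let $\overline{S}$ be an $\mathbb{F}_{q^t}$-subspace of $\mathbb{F}_{q^n}$ of $\mathbb{F}_{q^t}$-dimension $l>0$, $b \in \mathbb{F}_{q^n}^*$ with $\mathbb{F}_{q^t}\cap b\overline{S}=\{0\}$, $0<m<t$, $k = tl+m$ with $t+1 \le k \le n$, and $S = \overline{S} \oplus b\langle 1, \lambda, \ldots, \lambda^{m-1}\rangle_{\mathbb{F}_q}$, with $Y=\langle S\rangle_{\mathbb{F}_{q^t}} = \mathbb{F}_{q^n}$ and $2m \ge t-1$. If $\mathrm{Orb}(S)$ is an $r$-FWS code with $r = 2m+t(l-1)$, then $H(\overline{S}) = \mathbb{F}_{q^t}$.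
   Context: $\mathrm{Orb}(S)=\{\alpha S:\alpha\in\mathbb{F}_{q^n}^*\}$. For an $\mathbb{F}_q$-subspace $V$ of $\mathbb{F}_{q^n}$, the stabilizer is $H(V) = \{x \in \mathbb{F}_{q^n}^* : xV = V\} \cup \{0\}$ (a subfield of $\mathbb{F}_{q^n}$). With $d(U,V)=2k-2\dim_{\mathbb{F}_q}(U\cap V)$ and $\omega_{2i}(\mathrm{Orb}(S))=|\{\alpha S: d(S,\alpha S)=2i\}|$ for $i=1,\dots,k$, $\mathrm{Orb}(S)$ is an $r$-FWS code if $\omega_{2i}=0$ for the last $r$ indices $i=k-r+1,\ldots,k$ and $\omega_{2i}\neq 0$ for all $i=1,\ldots,k-r$. $\langle S\rangle_{\mathbb{F}_{q^t}}$ denotes the $\mathbb{F}_{q^t}$-span of $S$. *)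

From HB Require Import structures.
From mathcomp Require Import all_boot all_order all_algebra all_field.
Set Implicit Arguments. Unset Strict Implicit. Unset Printing Implicit Defensive.
Import GRing.Theory.
Local Open Scope ring_scope.

(* Setting: F = F_q a finite field, L = F_{q^n} a finite-dimensional field
   extension of F, subspaces are F-subspaces {vspace L}. *)
Section Defs.
Variables (F : finFieldType) (L : fieldExtType F).

Definition orb_elt (a : L) (S : {vspace L}) : {vspace L} := (<[a]> * S)%VS.

Definition subdist (k : nat) (U V : {vspace L}) : nat :=
  (2 * k - 2 * \dim (U :&: V))%N.

(* omega_{2i}(Orb(S)) <> 0, i.e. the set {alpha S : d(S, alpha S) = 2i}
   (alpha ranging over L^* ) is nonempty *)
Definition omega_nonzero (S : {vspace L}) (i : nat) : Prop :=
  exists a : L, a != 0 /\ subdist (\dim S) S (orb_elt a S) = (2 * i)%N.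

Definition FWS (S : {vspace L}) (r : nat) : Prop :=
  (forall i : nat, (\dim S - r < i <= \dim S)%N -> ~ omega_nonzero S i) /\
  (forall i : nat, (1 <= i <= \dim S - r)%N -> omega_nonzero S i).

Definition stab (V : {vspace L}) : pred L :=
  fun x => (x == 0) || ((x != 0) && (orb_elt x V == V)).

End Defs.

From HB Require Import structures.
From mathcomp Require Import all_boot all_order all_algebra all_field.
Import GRing.Theory.
Local Open Scope ring_scope.

(* Since K = F_q(lambda)
   has degree t and S lies in Sbar + b K, the dimension bounds force
   n = t (l + 1).  If x stabilises Sbar, the field K(x) also stabilises it,
   so its degree divides both dim Sbar = t l and n = t (l + 1), hence divides
   gcd (t l) (t (l + 1)) = t, and K(x) = K. *)

Lemma dvdn_eq_mulnS t l n :
  (t %| n)%N -> (t * l < n <= t * l + t)%N -> n = (t * l.+1)%N.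
Proof.
move=> /dvdnP[c ->] /andP[lt_tl_ct le_ct_tlt].
have t_gt0 : (0 < t)%N by rewrite lt0n; apply: contraTneq lt_tl_ct => ->; rewrite !muln0.
rewrite mulnC; congr (_ * _)%N; apply/eqP; rewrite eqn_leq.
rewrite -(leq_pmul2l t_gt0) -(ltn_pmul2l t_gt0) mulnS addnC !(mulnC t c).
by rewrite le_ct_tlt.
Qed.

Section SubfieldModules.
Set Implicit Arguments.
Unset Strict Implicit.

Variables (F : fieldType) (L : fieldExtType F).

Lemma prodv_line_subfield_eq (K : {subfield L}) (V : {vspace L}) x :
  (K * V <= V)%VS -> x \in K -> x != 0 -> (<[x]> * V)%VS = V.
Proof.
move=> KV xK x_neq0; apply/eqP; rewrite eqEdim prodvC dim_cosetv // leqnn andbT.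
by rewrite prodvC (subv_trans _ KV) // prodvSl // -memvE.
Qed.

Lemma adjoin_modl (K : {subfield L}) (V : {vspace L}) x :
  (K * V <= V)%VS -> (<[x]> * V)%VS = V -> (<<K; x>> * V <= V)%VS.
Proof. by move=> KV xV; apply: agenv_modl; rewrite prodvDl subv_add KV xV subvv. Qed.

Lemma dim_prodv_subfield_le (K : {subfield L}) (U W : {vspace L}) b :
  (K * U <= U)%VS -> (W <= K)%VS ->
  (\dim (K * (U + <[b]> * W)) <= \dim U + \dim K)%N.
Proof.
move=> KU WK; rewrite prodvDr (leq_trans (dimv_add_leqif _ _)) // leq_add //.
  by rewrite dimvS.
rewrite prodvCA (leq_trans (dim_prodv _ _)) // dim_vline.
by case: (b != 0); rewrite ?mul1n ?mul0n // dimvS // (subv_trans (prodvSr _ WK)) ?prodv_id.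
Qed.

Lemma subfield_module_eq (K E : {subfield L}) (V : {vspace L}) l :
  (K <= E)%VS -> (E * V <= V)%VS ->
  \dim V = (\dim K * l)%N -> \dim {:L} = (\dim K * l.+1)%N -> E = K :> {vspace L}.
Proof.
move=> KE EV dimV dimL; apply/eqP; rewrite eq_sym eqEdim KE /=.
have dE_V := field_module_dimS EV.
have dE_L : (\dim E %| \dim {:L})%N by rewrite field_module_dimS ?subvf.
have : (\dim E %| gcdn (\dim V) (\dim {:L}))%N by rewrite dvdn_gcd dE_V dE_L.
rewrite dimV dimL -muln_gcdr (eqP (coprimenS l)) muln1.
by apply: dvdn_leq; rewrite adim_gt0.
Qed.

End SubfieldModules.

Theorem lemma4p8 (F : finFieldType) (L : fieldExtType F)
  (lambda b : L) (Sbar : {vspace L}) (t l m k r : nat) :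
  let n := (\dim {: L})%N in
  let K := <<1%VS; lambda>>%VS in          (* F_{q^t} = F_q(lambda) *)
  let P := <<[seq (lambda ^+ j)%R | j <- iota 0 m]>>%VS in
  let S := (Sbar + <[b]> * P)%VS in
  lambda \notin 1%VS ->
  t = \dim K ->
  (K * Sbar <= Sbar)%VS ->                  (* Sbar is an F_{q^t}-subspace *)
  \dim Sbar = (t * l)%N -> (0 < l)%N ->     (* of F_{q^t}-dimension l > 0 *)
  b != 0 ->
  (K :&: <[b]> * Sbar)%VS = 0%VS ->
  (0 < m < t)%N ->
  k = (t * l + m)%N ->
  (t + 1 <= k <= n)%N ->
  directv (Sbar + <[b]> * P) ->             (* the sum defining S is direct *)
  (K * S)%VS = fullv ->                     (* <S>_{F_{q^t}} = F_{q^n} *)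
  (t - 1 <= 2 * m)%N ->
  r = (2 * m + t * (l - 1))%N ->
  FWS S r ->
  forall x : L, stab Sbar x = (x \in K).
Proof.
move=> n K P S _ -> KS dimS _ _ _ /andP[m_gt0 _] -> /andP[_ le_k_n] _ KSf _ _ _ x.
have PK : (P <= K)%VS.
  by apply/span_subvP => _ /mapP[j _ ->]; rewrite rpredX // memv_adjoin.
have dim_n : n = (\dim K * l.+1)%N.
  apply: dvdn_eq_mulnS; first by rewrite field_module_dimS ?subvf.
  rewrite (leq_trans _ le_k_n) /=; last by rewrite -addn1 leq_add2l.
  by rewrite /n -KSf -dimS dim_prodv_subfield_le.
rewrite /stab /orb_elt; have [-> | x_neq0] := eqVneq x 0; first by rewrite mem0v.
apply/idP/idP => /= [/eqP xS | xK]; last by rewrite (prodv_line_subfield_eq KS).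
have KxS := adjoin_modl KS xS.
have KxK : <<K; x>>%VS = K := subfield_module_eq (subv_adjoin K x) KxS dimS dim_n.
by rewrite -KxK memv_adjoin.
Qed.
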